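(* In the setting described in the context, assume $3$ divides $q^2+q+1$, let $d=3$ and $t=\frac13(q^2+q+1)$. Then $w_u\le2$ for every $u$. Moreover, for $j=0,1,2$, the number $v_j$ of indices $u\in\{0,\dots,t-1\}$ with $w_u=j$ is $v_0=\frac13(q^2-2q+1)$, $v_1=q-1$, $v_2=1$.
   Context: Let $q=p^h$ with $p$ prime, $h\ge1$. Let $\alpha$ be a primitive element of $\mathbb{F}_{q^3}$; the points of $PG(2,q)$ are the 1-dimensional $\mathbb{F}_q$-subspaces of $\mathbb{F}_{q^3}$, and $P_i$ denotes the point represented by $\alpha^i$, so $PG(2,q)=\{P_0,\dots,P_{q^2+q}\}$. Let $\tau:P_i\mapsto P_{ip\bmod(q^2+q+1)}$ (a collineation) and let $\ell_0$ be a line of $PG(2,q)$ fixed by $\tau$. For a positive divisor $t$ of $q^2+q+1$ and $i=0,\dots,t-1$ let $O_i=\{P_u:u\equiv i\pmod t\}$, and for $u=0,\dots,t-1$ let $w_u=|\ell_0\cap O_u|$. *)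

From HB Require Import structures.
From mathcomp Require Import all_boot all_order all_algebra all_field.
Set Implicit Arguments. Unset Strict Implicit. Unset Printing Implicit Defensive.
Import GRing.Theory.
Local Open Scope ring_scope.

Definition subfieldq (L : finFieldType) (q : nat) : {set L} :=
  [set c : L | c ^+ q == c].

Definition Fq_subspace (L : finFieldType) (q : nat) (S : {set L}) : Prop :=
  [/\ (0 : L) \in S,
      (forall x y, x \in S -> y \in S -> x + y \in S) &
      (forall c x, c \in subfieldq L q -> x \in S -> c * x \in S)].

(* A line of PG(2,q) = a 2-dimensional F_q-subspace of F_{q^3},
   i.e. an F_q-subspace with q^2 elements. *)
Definition PG_line (L : finFieldType) (q : nat) (S : {set L}) : Prop :=
  Fq_subspace q S /\ #|S| = (q ^ 2)%N.

(* w_u = |l ∩ O_u|: number of points P_i (0 <= i < q^2+q+1) with i = u mod t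
   lying on l (P_i lies on l iff its representative alpha^i is in l). *)
Definition wcount (L : finFieldType) (q t : nat) (alpha : L) (l : {set L})
  (u : nat) : nat :=
  #|[set i : 'I_(q ^ 2 + q + 1) | (i %% t == u)%N && (alpha ^+ i \in l)]|.

From HB Require Import structures.
From mathcomp Require Import all_boot all_order all_algebra all_field.
From mathcomp Require Import zify ring.
Set Implicit Arguments. Unset Strict Implicit. Unset Printing Implicit Defensive.
Import GRing.Theory.

(* Write N = q^2 + q + 1, so that P_i = P_(i mod N), and let beta = alpha^t. Multiplication
   by beta is a collineation of order 3 permuting each class O_u = {P_u, P_(u+t), P_(u+2t)}
   cyclically, and P_i, P_(i+t) both lie on l iff P_i lies on l and on the line beta^-1 l.
   These two lines meet, by counting (q^2 * q^2 > q^3), and they are distinct, since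
   beta l = l would make beta a root of a quadratic over F_q, i.e. an element of
   F_(q^2) ∩ F_(q^3) = F_q. So exactly one i has P_i and P_(i+t) on l: no class lies on l,
   exactly one class meets l twice, and as l has q + 1 points the other classes meet l
   once (q - 1 of them) or not at all. *)

Section Counting.
Local Open Scope nat_scope.

Lemma card_set_sum (I : finType) (P : pred I) : #|[set i | P i]| = \sum_i P i.
Proof.
by rewrite -sum1_card big_mkcond; apply: eq_bigr => i _; rewrite inE; case: (P i).
Qed.

Lemma sum_split_mod m d (F : nat -> nat) :
  \sum_(k < m * d) F k = \sum_(j < m) \sum_(i < d) F (i + j * d).
Proof.
rewrite -(big_mkord xpredT) big_nat_mul big_mkord; apply: eq_bigr => j _.
by rewrite -{1}(add0n (j * d)) big_addn mulSn addnK big_mkord.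
Qed.

Lemma sum_nat_le2 (I : finType) (F : I -> nat) : (forall i, F i <= 2) ->
  \sum_i F i = #|[set i | F i == 1]| + 2 * #|[set i | F i == 2]|.
Proof.
move=> F_le2; rewrite !card_set_sum big_distrr -big_split /=.
by apply: eq_bigr => i _; move: (F_le2 i); case: (F i) => [|[|[|]]].
Qed.

Lemma card_levels_le2 (I : finType) (F : I -> nat) : (forall i, F i <= 2) ->
  #|[set i | F i == 0]| + #|[set i | F i == 1]| + #|[set i | F i == 2]| = #|I|.
Proof.
move=> F_le2; rewrite !card_set_sum -!big_split -sum1_card /=.
by apply: eq_bigr => i _; move: (F_le2 i); case: (F i) => [|[|[|]]].
Qed.

End Counting.

Section ShiftPairs.
Local Open Scope nat_scope.
Variables (N t : nat) (g : nat -> bool) (i0 : 'I_N).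
Hypotheses (N_eq : N = 3 * t) (t_gt0 : 0 < t) (g_mod : forall k, g k = g (k %% N)).
Hypothesis shift_pairs : [set i : 'I_N | g i && g (i + t)] = [set i0].

Let w u := #|[set i : 'I_N | (i %% t == u) && g i]|.

Lemma orbit_countE u : u < t -> w u = g u + g (u + t) + g (u + 2 * t).
Proof.
move=> ut; rewrite /w card_set_sum.
rewrite -(big_mkord xpredT (fun i => (i %% t == u) && g i : nat)) N_eq big_mkord.
rewrite (sum_split_mod 3 t (fun i => (i %% t == u) && g i : nat)).
rewrite !big_ord_recl big_ord0 /=.
have inner j : \sum_(i < t) ((i + j * t) %% t == u) && g (i + j * t) = g (u + j * t).
  rewrite (eq_bigr (fun i : 'I_t => if i == u :> nat then g (i + j * t) : nat else 0)).
    by rewrite -big_mkcond (big_ord1_eq _ (fun i => g (i + j * t) : nat)) ut.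
  by move=> i _; rewrite addnC modnMDl modn_small //; case: eqP.
by rewrite !inner /bump /= !addn0 mul1n addnA.
Qed.

Lemma sum_orbit_count : \sum_(u < t) w u = #|[set i : 'I_N | g i]|.
Proof.
under eq_bigr do rewrite /w card_set_sum.
rewrite card_set_sum exchange_big; apply: eq_bigr => i _.
rewrite (eq_bigr (fun u : 'I_t => if u == i %% t :> nat then g i : nat else 0)).
  by rewrite -big_mkcond (big_ord1_eq _ (fun=> g i : nat)) ltn_pmod.
by move=> u _; rewrite eq_sym; case: eqP.
Qed.

Lemma orbit_count_spec u : u < t -> w u <= 2 /\ (w u == 2) = (u == i0 %% t).
Proof.
move=> ut; rewrite orbit_countE //.
have pairE k : k < N -> g k && g (k + t) = (k == i0 :> nat).
  move=> kN; move/setP/(_ (Ordinal kN)): shift_pairs.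
  by rewrite !inE -(inj_eq val_inj).
have i0_lt : i0 < 3 * t by rewrite -N_eq.
have g_wrap : g (u + 2 * t + t) = g u.
  by rewrite g_mod [g u]g_mod (_ : u + 2 * t + t = 1 * N + u) ?modnMDl //; lia.
have pair0 := pairE u ltac:(lia).
have pair1 := pairE (u + t) ltac:(lia).
have pair2 := pairE (u + 2 * t) ltac:(lia); rewrite g_wrap in pair2.
rewrite (_ : u + t + t = u + 2 * t) in pair1; last lia.
have -> : (u == i0 %% t) = [|| u == i0, u + t == i0 | u + 2 * t == i0].
  rewrite (divn_eq i0 t) modnMDl modn_small ?ltn_pmod //.
  have : i0 %/ t < 3 by rewrite ltn_divLR.
  have := ltn_pmod i0 t_gt0; move: (i0 %/ t) (i0 %% t) => d r.
  by case: d => [|[|[|//]]] r_lt _; apply/idP/idP; lia.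
rewrite -pair0 -pair1 -pair2.
have not_all3 : ~~ [&& g u, g (u + t) & g (u + 2 * t)].
  apply/negP => /and3P[g1 g2 g3]; move: pair0 pair1; rewrite g1 g2 g3 /=.
  by move=> /esym/eqP ? /esym/eqP ?; lia.
by move: not_all3; case: (g u); case: (g (u + t)); case: (g (u + 2 * t)).
Qed.

Lemma orbit_count_le2 u : u < t -> w u <= 2.
Proof. by case/orbit_count_spec. Qed.

Lemma card_orbit_count2 : #|[set u : 'I_t | w u == 2]| = 1.
Proof.
apply/eqP/cards1P; exists (Ordinal (ltn_pmod i0 t_gt0)); apply/setP => u.
by rewrite !inE; case: (orbit_count_spec (ltn_ord u)) => _ ->.
Qed.

Lemma card_orbit_count1 : #|[set u : 'I_t | w u == 1]| = #|[set i : 'I_N | g i]| - 2.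
Proof.
have w_le2 (u : 'I_t) : w u <= 2 by apply: orbit_count_le2.
by rewrite -sum_orbit_count (sum_nat_le2 w_le2) card_orbit_count2 addnK.
Qed.

Lemma card_orbit_count0 : #|[set u : 'I_t | w u == 0]| = t + 1 - #|[set i : 'I_N | g i]|.
Proof.
have w_le2 (u : 'I_t) : w u <= 2 by apply: orbit_count_le2.
have := card_levels_le2 w_le2; have := sum_nat_le2 w_le2.
rewrite sum_orbit_count card_orbit_count2 card_ord /=; lia.
Qed.

End ShiftPairs.

Local Open Scope ring_scope.

Lemma meet_nonzero (V : finZmodType) (A B : {set V}) :
  {in A &, forall x y, x - y \in A} -> {in B &, forall x y, x - y \in B} ->
  (#|V| < #|A| * #|B|)%N -> exists2 z : V, z != 0 & z \in A :&: B.
Proof.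
move=> subA subB ltV_AB.
case: (pickP [pred z | (z != 0) && (z \in A :&: B)]) => [z /andP[]|meet0].
  by exists z.
suff: (#|A| * #|B| <= #|V|)%N by rewrite leqNgt ltV_AB.
have sum_inj : {in setX A B &, injective (fun ab => ab.1 + ab.2)}.
  move=> [a b] [a' b'] /setXP[aA bB] /setXP[a'A b'B] /= sum_eq.
  have ab_eq : a - a' = b' - b.
    by rewrite -(addKr a' b') -sum_eq addrA addrK addrC.
  have /negbT := meet0 (a - a'); rewrite /= inE subA // ab_eq subB // !andbT.
  rewrite negbK subr_eq0 => /eqP b_eq.
  by move: sum_eq; rewrite b_eq => /addIr ->.
by rewrite -cardsX -(card_in_imset sum_inj) max_card.
Qed.

Section Subfield.
Variables (L : finFieldType) (q : nat).
Hypothesis q_pchar : [pchar L].-nat q.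
Local Notation Fq := (subfieldq L q).

Lemma subfieldqN1 : -1 \in Fq.
Proof. by rewrite inE exprNn_pchar // expr1n. Qed.

Lemma subfieldqB a b : a \in Fq -> b \in Fq -> a - b \in Fq.
Proof. by rewrite !inE exprDn_pchar // exprNn_pchar // => /eqP-> /eqP->. Qed.

Lemma subfieldqM a b : a \in Fq -> b \in Fq -> a * b \in Fq.
Proof. by rewrite !inE exprMn => /eqP-> /eqP->. Qed.

Lemma subfieldqV a : a \in Fq -> a^-1 \in Fq.
Proof. by rewrite !inE exprVn => /eqP->. Qed.

(* [x ^+ q] is again a root, so it is either [x] or the other root [b - x]. *)
Lemma subfieldq_quadratic_root a b x : a \in Fq -> b \in Fq ->
  x ^+ 2 = a + b * x -> x ^+ (q ^ 2) = x.
Proof.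
rewrite !inE => /eqP aFq /eqP bFq x_root.
have xq_root : (x ^+ q) ^+ 2 = a + b * x ^+ q.
  by rewrite exprAC x_root exprDn_pchar // exprMn aFq bFq.
have : (x - x ^+ q) * (x + x ^+ q - b) = 0.
  transitivity (x ^+ 2 - (a + b * x) - ((x ^+ q) ^+ 2 - (a + b * x ^+ q))); first by ring.
  by rewrite x_root xq_root !subrr.
rewrite expnS expn1 exprM => /eqP; rewrite mulf_eq0 !subr_eq0.
case/orP=> [/eqP x_fixed | /eqP xq_sum]; first by rewrite -!x_fixed.
have xqE : x ^+ q = b - x by rewrite -xq_sum addrC addKr.
by rewrite xqE exprDn_pchar // exprNn_pchar // bFq xqE opprB addrC subrK.
Qed.

Section Subspace.
Variable S : {set L}.
Hypothesis S_subspace : Fq_subspace q S.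

Lemma Fq_subspaceZ c x : c \in Fq -> x \in S -> c * x \in S.
Proof. by case: S_subspace => _ _ mulS; apply: mulS. Qed.

Lemma Fq_subspaceD x y : x \in S -> y \in S -> x + y \in S.
Proof. by case: S_subspace => _ addS _; apply: addS. Qed.

Lemma Fq_subspaceB x y : x \in S -> y \in S -> x - y \in S.
Proof.
by move=> xS yS; rewrite Fq_subspaceD // -mulN1r Fq_subspaceZ ?subfieldqN1.
Qed.

Lemma Fq_subspace_memZ c x : c \in Fq -> c != 0 -> (c * x \in S) = (x \in S).
Proof.
move=> cFq c_neq0; apply/idP/idP => [cxS|]; last exact: Fq_subspaceZ.
by rewrite -(mulKf c_neq0 x) Fq_subspaceZ ?subfieldqV.
Qed.

End Subspace.
End Subfield.

Section Line.
Variables (L : finFieldType) (q : nat) (alpha : L) (l : {set L}).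
Hypotheses (q_gt1 : (1 < q)%N) (q_pchar : [pchar L].-nat q) (cardL : #|L| = (q ^ 3)%N).
Hypotheses (alpha_prim : ((q ^ 3).-1).-primitive_root alpha) (l_line : PG_line q l).
Local Notation Fq := (subfieldq L q).
Local Notation N := (q ^ 2 + q + 1)%N.

Let l_subspace : Fq_subspace q l := proj1 l_line.

Lemma pred_q3E : (q ^ 3).-1 = ((q - 1) * N)%N.
Proof. rewrite -subn1 !expnS expn0 !muln1; nia. Qed.

Lemma alpha_neq0 : alpha != 0.
Proof.
apply/eqP => alpha0; have := prim_expr_order alpha_prim.
rewrite alpha0 expr0n gtn_eqF ?(prim_order_gt0 alpha_prim) // => /eqP.
by rewrite eq_sym oner_eq0.
Qed.

Lemma expr_alpha_subfieldq m : (alpha ^+ m \in Fq) = (N %| m)%N.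
Proof.
rewrite inE -exprM (eq_prim_root_expr alpha_prim).
have -> : (m * q = m + m * (q - 1))%N by nia.
rewrite -{3}(addn0 m) eqn_modDl mod0n pred_q3E.
change (((q - 1) * N %| m * (q - 1)) = (N %| m))%N.
by rewrite [(m * _)%N]mulnC dvdn_pmul2l ?subn_gt0.
Qed.

Lemma exists_expr_alpha x : x != 0 -> exists k : 'I_(q ^ 3).-1, x = alpha ^+ k.
Proof.
move=> x_neq0; have x_unity : x ^+ (q ^ 3).-1 = 1.
  apply: (mulIf x_neq0); rewrite mul1r -exprSr prednK ?expn_gt0 ?(ltnW q_gt1) //.
  by rewrite -cardL expf_card.
by have [k ->] := prim_rootP alpha_prim x_unity; exists k.
Qed.

Lemma eqmodN_of_subfieldq_multiple a b c : c \in Fq ->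
  alpha ^+ a = c * alpha ^+ b -> (a = b %[mod N])%N.
Proof.
move=> cFq ab_eq.
have c_neq0 : c != 0.
  by apply/eqP=> c0; move: (expf_neq0 a alpha_neq0); rewrite ab_eq c0 mul0r eqxx.
have [m cE] := exists_expr_alpha c_neq0.
have N_m : (N %| m)%N by rewrite -expr_alpha_subfieldq -cE.
have N_n : (N %| (q ^ 3).-1)%N by rewrite pred_q3E dvdn_mull.
move/eqP: ab_eq; rewrite cE -exprD (eq_prim_root_expr alpha_prim) => /eqP ab_mod.
rewrite -(modn_dvdm a N_n) ab_mod (modn_dvdm _ N_n).
by case/dvdnP: N_m => k ->; rewrite modnMDl.
Qed.

Lemma card_subfieldq_ge : (q <= #|Fq|)%N.
Proof.
pose units := [set alpha ^+ (j * N) | j : 'I_(q - 1)].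
have card_units : #|units| = (q - 1)%N.
  rewrite card_imset ?card_ord // => i j /eqP.
  rewrite (eq_prim_root_expr alpha_prim) pred_q3E.
  rewrite !modn_small ?ltn_pmul2r ?addn1 // eqn_pmul2r ?addn1 // => /eqP; exact: val_inj.
have units_neq0 : 0 \notin units.
  by apply/imsetP=> -[j _ /eqP]; rewrite eq_sym expf_eq0 (negbTE alpha_neq0) andbF.
have units_sub : 0 |: units \subset Fq.
  apply/subsetP => x; rewrite in_setU1 => /orP[/eqP -> | /imsetP[j _ ->]].
    by rewrite inE expr0n gtn_eqF ?(ltnW q_gt1).
  by rewrite expr_alpha_subfieldq dvdn_mull.
have := subset_leq_card units_sub.
by rewrite cardsU1 units_neq0 card_units add1n subn1 prednK // ltnW.
Qed.

Lemma mem_line_expr_modN k : (alpha ^+ k \in l) = (alpha ^+ (k %% N) \in l).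
Proof.
rewrite {1}(divn_eq k N) exprD (Fq_subspace_memZ l_subspace) //.
  by rewrite expr_alpha_subfieldq dvdn_mull.
by rewrite expf_neq0 ?alpha_neq0.
Qed.

Lemma line_span x y : x != 0 -> x \in l -> y \in l ->
  (forall c, c \in Fq -> y != c * x) ->
  forall z, z \in l -> exists a b, [/\ a \in Fq, b \in Fq & z = a * x + b * y].
Proof.
move=> x_neq0 xl yl y_indep z zl.
pose comb ab := ab.1 * x + ab.2 * y.
have comb_inj : {in setX Fq Fq &, injective comb}.
  move=> [a b] [a' b'] /setXP[aF bF] /setXP[a'F b'F]; rewrite /comb /= => comb_eq.
  have b_eq : b = b'.
    apply/eqP/negPn/negP => b_neq.
    have bb_neq0 : b' - b != 0 by rewrite subr_eq0 eq_sym.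
    have y_comb : (b' - b) * y = (a - a') * x.
      by apply: (addIr (a * x + b * y)); rewrite {2}comb_eq; ring.
    have cF := subfieldqM (subfieldqB q_pchar aF a'F)
                          (subfieldqV (subfieldqB q_pchar b'F bF)).
    case/negP: (y_indep _ cF); apply/eqP.
    by rewrite mulrAC -y_comb mulrAC divff // mul1r.
  by move: comb_eq; rewrite -b_eq => /addIr /(mulIf x_neq0) ->.
have comb_sub : comb @: setX Fq Fq \subset l.
  apply/subsetP => _ /imsetP[[a b] /setXP[aF bF] ->].
  by rewrite (Fq_subspaceD l_subspace) ?(Fq_subspaceZ l_subspace).
have comb_onto : comb @: setX Fq Fq = l.
  apply/eqP; rewrite eqEcard comb_sub card_in_imset // cardsX (proj2 l_line).
  by rewrite expnS expn1 leq_mul ?card_subfieldq_ge.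
by move: zl; rewrite -comb_onto => /imsetP[[a b] /setXP[aF bF] ->]; exists a, b.
Qed.

Lemma line_mul_dependent beta x y : beta ^+ q != beta ->
  x != 0 -> x \in l -> y \in l -> beta * x \in l -> beta * y \in l ->
  exists2 c, c \in Fq & y = c * x.
Proof.
move=> beta_notFq x_neq0 xl yl bxl byl.
case: (pickP [pred c | (c \in Fq) && (y == c * x)]) => [c /andP[cF /eqP] | y_indep].
  by exists c.
have {}y_indep c : c \in Fq -> y != c * x.
  by move=> cF; apply/negbT; rewrite -(andTb (y == _)) -cF; exact: y_indep.
have beta_l z : z \in l -> beta * z \in l.
  move=> /(line_span x_neq0 xl yl y_indep) [a [b [aF bF ->]]].
  rewrite mulrDr (mulrCA beta a) (mulrCA beta b).
  by apply: (Fq_subspaceD l_subspace); apply: (Fq_subspaceZ l_subspace).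
have bx_indep c : c \in Fq -> beta * x != c * x.
  by move=> cF; apply: contra beta_notFq => /eqP /(mulIf x_neq0) ->; rewrite inE in cF.
have [a [b [aF bF quad]]] := line_span x_neq0 xl bxl bx_indep (beta_l _ bxl).
have beta_quad : beta ^+ 2 = a + b * beta.
  by apply: (mulIf x_neq0); rewrite expr2 -mulrA quad mulrDl mulrA.
(* [beta] lies in [F_(q^2)] and in [F_(q^3)] = L, hence in [Fq]. *)
case/negP: beta_notFq; apply/eqP.
rewrite -[in RHS](expf_card beta) cardL expnSr exprM.
by rewrite (subfieldq_quadratic_root q_pchar aF bF beta_quad).
Qed.

Lemma line_meets_mul beta : beta != 0 -> exists2 z, z != 0 & (z \in l) && (beta * z \in l).
Proof.
move=> beta_neq0.
have subB := Fq_subspaceB q_pchar l_subspace.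
have card_B : #|[set z | beta * z \in l]| = #|l| := card_preimset l (mulfI beta_neq0).
have [|||z z_neq0] := @meet_nonzero L l [set z | beta * z \in l].
- exact: subB.
- by move=> x y; rewrite !inE mulrBr; apply: subB.
- by rewrite card_B (proj2 l_line) cardL -expnD ltn_exp2l.
by rewrite !inE => zl; exists z.
Qed.

Lemma card_line_shift_pairs t : (0 < t < N)%N ->
  #|[set i : 'I_N | (alpha ^+ i \in l) && (alpha ^+ (i + t) \in l)]| = 1%N.
Proof.
case/andP=> t_gt0 t_ltN.
have beta_neq0 : alpha ^+ t != 0 by rewrite expf_neq0 ?alpha_neq0.
have beta_notFq : (alpha ^+ t) ^+ q != alpha ^+ t.
  by have := expr_alpha_subfieldq t; rewrite inE gtnNdvd // => ->.
have [z z_neq0 /andP[zl bzl]] := line_meets_mul beta_neq0.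
have [k zE] := exists_expr_alpha z_neq0.
have N_gt0 : (0 < N)%N by rewrite addn1.
apply/eqP/cards1P; exists (Ordinal (ltn_pmod k N_gt0)); apply/setP => i.
rewrite !inE; apply/idP/eqP => [/andP[il itl] | ->]; last first.
  rewrite /= -!mem_line_expr_modN -zE zl /= mem_line_expr_modN modnDml.
  by rewrite -mem_line_expr_modN exprD -zE mulrC.
have bil : alpha ^+ t * alpha ^+ i \in l by rewrite -exprD addnC.
have [c cF iE] := line_mul_dependent beta_notFq z_neq0 zl il bzl bil.
apply: val_inj; rewrite /= -(modn_small (ltn_ord i)).
by apply: (eqmodN_of_subfieldq_multiple cF); rewrite -zE.
Qed.

Lemma card_line_points : #|[set i : 'I_N | alpha ^+ i \in l]| = (q + 1)%N.
Proof.
have powers_inj : injective (fun k : 'I_(q ^ 3).-1 => alpha ^+ k).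
  move=> i j /eqP; rewrite (eq_prim_root_expr alpha_prim) !modn_small //.
  by move/eqP/val_inj.
have powers_l : (fun k : 'I_(q ^ 3).-1 => alpha ^+ k) @:
    [set k : 'I_(q ^ 3).-1 | alpha ^+ k \in l] = l :\ 0.
  apply/setP => x; rewrite !inE; apply/imsetP/andP => [[k] | [x_neq0 xl]].
    by rewrite inE => kl ->; rewrite expf_neq0 ?alpha_neq0.
  by have [k xE] := exists_expr_alpha x_neq0; exists k; rewrite ?inE -xE.
have count_powers : #|[set k : 'I_(q ^ 3).-1 | alpha ^+ k \in l]| =
                    ((q - 1) * #|[set i : 'I_N | alpha ^+ i \in l]|)%N.
  rewrite !card_set_sum -(big_mkord xpredT (fun k => (alpha ^+ k \in l) : nat)).
  rewrite pred_q3E big_mkord (sum_split_mod _ _ (fun k => (alpha ^+ k \in l) : nat)).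
  transitivity (\sum_(j < q - 1) \sum_(i < N) (alpha ^+ i \in l) : nat)%N.
    apply: eq_bigr => j _; apply: eq_bigr => i _.
    by rewrite mem_line_expr_modN addnC modnMDl modn_small.
  by rewrite big_const_ord iter_addn_0 mulnC.
have l0 : (0 : L) \in l by case: l_subspace.
have := cardsD1 0 l; rewrite l0 (proj2 l_line) -powers_l card_imset // count_powers.
move=> q2E; apply/eqP; rewrite -(eqn_pmul2l (_ : 0 < q - 1)%N) ?subn_gt0 //.
by apply/eqP; nia.
Qed.

End Line.

Theorem proposition9 (p h : nat) (L : finFieldType) (alpha : L) (l : {set L}) :
  prime p -> (0 < h)%N ->
  #|L| = (p ^ (3 * h))%N ->
  (((p ^ h) ^ 3).-1).-primitive_root alpha ->
  PG_line (p ^ h) l ->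
  (forall i : nat, (i < (p ^ h) ^ 2 + p ^ h + 1)%N ->
     (alpha ^+ i \in l) = (alpha ^+ ((i * p) %% ((p ^ h) ^ 2 + p ^ h + 1)) \in l)) ->
  (3 %| (p ^ h) ^ 2 + p ^ h + 1)%N ->
  let q := (p ^ h)%N in
  let t := ((q ^ 2 + q + 1) %/ 3)%N in
  let w := wcount q t alpha l in
  (forall u, (u < t)%N -> (w u <= 2)%N) /\
  #|[set u : 'I_t | w u == 0%N]| = ((q ^ 2 - 2 * q + 1) %/ 3)%N /\
  #|[set u : 'I_t | w u == 1%N]| = (q - 1)%N /\
  #|[set u : 'I_t | w u == 2%N]| = 1%N.
Proof.
move=> p_prime h_gt0 cardL alpha_prim l_line _ three_dvd q t w.
have q_gt1 : (1 < q)%N by rewrite -[1%N](expn0 p) ltn_exp2l ?prime_gt1.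
have cardLq : #|L| = (q ^ 3)%N by rewrite cardL mulnC expnM.
have q_pchar : [pchar L].-nat q.
  by rewrite pnatX (pnatE _ p_prime) (card_finPcharP cardL p_prime).
have N_eq : (q ^ 2 + q + 1 = 3 * t)%N by rewrite mulnC divnK.
have t_bounds : (0 < t < q ^ 2 + q + 1)%N by lia.
have g_mod := mem_line_expr_modN q_gt1 q_pchar cardLq alpha_prim l_line.
have points := card_line_points q_gt1 q_pchar cardLq alpha_prim l_line.
have /eqP/cards1P[i0 pairs_i0] :=
  card_line_shift_pairs q_gt1 q_pchar cardLq alpha_prim l_line t_bounds.
have t_gt0 : (0 < t)%N by case/andP: t_bounds.
split; first exact: orbit_count_le2 N_eq t_gt0 g_mod pairs_i0.
rewrite /w /wcount (card_orbit_count0 N_eq t_gt0 g_mod pairs_i0).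
rewrite (card_orbit_count1 N_eq t_gt0 g_mod pairs_i0).
rewrite (card_orbit_count2 N_eq t_gt0 g_mod pairs_i0).
rewrite points; split; [| by split; [lia |]].
have -> : (q ^ 2 - 2 * q + 1 = 3 * (t - q))%N by nia.
by rewrite mulKn //; lia.
Qed.
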